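(* Let $p\in(0,1)$, $\gamma>0$, $B>0$, $w,N\in\mathbb{N}$, and let $(\xi_1^{(N)*},\dots,\xi_N^{(N)*})$ be the unique maximizer of $\mathcal{T}_N$. Then its effective length is $N$, i.e. $\xi_N^{(N)*}>0$.
   Context: Logarithms are base 2. For an admissible (nonnegative, with sum at most $B$) sequence $(x_j)_{j\ge1}$, $$\mathcal{T}_\infty(x_1,x_2,\dots)=\sum_{k=1}^{w}p^2(1-p)^{k-1}\frac{k}{2}\log_2\!\Big(1+\gamma\frac{B}{k}\Big)+\sum_{j=1}^{\infty}p(1-p)^{j+w-1}\frac12\log_2(1+\gamma x_j)+\sum_{k=1}^{\infty}p^2(1-p)^{k+w-1}\frac{w}{2}\log_2\!\Big(1+\gamma\frac{B-\sum_{j=1}^{k}x_j}{w}\Big).$$ For $N\in\mathbb{N}$ and $\xi_1,\dots,\xi_N\ge0$ with $\sum_{j=1}^N\xi_j\le B$, define $\mathcal{T}_N(\xi_1,\dots,\xi_N)=\mathcal{T}_\infty(\xi_1,\dots,\xi_N,0,0,\dots)$. $\mathcal{T}_N$ has a unique maximizer over this compact set, denoted $(\xi_j^{(N)*})_{j=1}^N$. The effective length of a finite sequence is the largest index $J$ with $\xi_J>0$ (all later entries being zero). *)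

From Stdlib Require Import Reals Lra.
From Coquelicot Require Import Coquelicot.
Open Scope R_scope.

Definition log2 (x : R) : R := ln x / ln 2.

Fixpoint rsum (f : nat -> R) (a n : nat) : R :=
  match n with
  | O => 0
  | S m => rsum f a m + f (a + m)%nat
  end.

(* Sequences (x_j)_{j>=1} are represented 0-based: x j in Coq is x_{j+1}.
   prefix x k = x_1 + ... + x_k. *)
Definition prefix (x : nat -> R) (k : nat) : R := rsum x 0 k.

Definition T_inf (p gamma B : R) (w : nat) (x : nat -> R) : R :=
  rsum (fun k => p ^ 2 * (1 - p) ^ (k - 1) * (INR k / 2)
                   * log2 (1 + gamma * (B / INR k))) 1 w
  + Series (fun i => p * (1 - p) ^ (S i + w - 1) * (1 / 2)
                       * log2 (1 + gamma * x i))
  + Series (fun i => p ^ 2 * (1 - p) ^ (S i + w - 1) * (INR w / 2)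
                       * log2 (1 + gamma * ((B - prefix x (S i)) / INR w))).

Definition ext (N : nat) (xi : nat -> R) : nat -> R :=
  fun i => if (i <? N)%nat then xi i else 0.

Definition T_N (p gamma B : R) (w N : nat) (xi : nat -> R) : R :=
  T_inf p gamma B w (ext N xi).

Definition admissibleN (B : R) (N : nat) (xi : nat -> R) : Prop :=
  (forall i, (i < N)%nat -> 0 <= xi i) /\ prefix xi N <= B.

Definition is_maximizer (p gamma B : R) (w N : nat) (xi : nat -> R) : Prop :=
  admissibleN B N xi /\
  forall eta, admissibleN B N eta -> T_N p gamma B w N eta <= T_N p gamma B w N xi.

From Stdlib Require Import Reals Lra Lia.
From Coquelicot Require Import Coquelicot.
Open Scope R_scope.

(* Put [cap t = log2 (1 + gamma t)], [q = 1 - p], and let [r_i = B - (xi_1 + ... + xi_(i-1))]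
   be the budget still unspent before slot [i].  Summation by parts shows that, up to a
   positive factor and an additive constant, [T_N] equals
     [w cap (B / w) + sum_(i = 1..N) q^(i-1) g(r_i, xi_i)],
   where [g(r, a) = cap a + w (cap ((r - a) / w) - cap (r / w))] is the marginal value
   of spending [a] in slot [i] rather than leaving it to the [w] window slots; note
   [g(r, 0) = 0].  Suppose [xi_N = 0].  If [r_N > 0], putting any [a < r_N / w] into
   slot [N] gives [g(r_N, a) > 0].  Otherwise the budget is spent at the last nonempty
   slot [j < N]; moving half of [xi_j] to slot [N] gains by the strict subadditivity of
   [cap], and this beats the loss [cap e - w cap (e / w) <= 0] (Bernoulli) at slot [N],
   which carries the smaller weight [q^(N-1) <= q^(j-1)]. *)

Lemma bernoulli_ineq (x : R) (n : nat) : -1 <= x -> 1 + INR n * x <= (1 + x) ^ n.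
Proof.
  intro Hx; induction n as [|n IH]; [simpl; lra|].
  rewrite S_INR; simpl.
  assert (0 <= INR n * (x * x)) by (apply Rmult_le_pos; [apply pos_INR | apply Rle_0_sqr]).
  nra.
Qed.

Lemma pow_le_pow_of_le_1 (q : R) (m n : nat) :
  0 <= q <= 1 -> (m <= n)%nat -> q ^ n <= q ^ m.
Proof.
  intros Hq Hmn.
  replace n with (m + (n - m))%nat by lia; rewrite pow_add.
  assert (q ^ (n - m) <= 1) by (rewrite <- (pow1 (n - m)); apply pow_incr; lra).
  assert (0 <= q ^ m) by (apply pow_le; lra).
  nra.
Qed.

Lemma ln2_pos : 0 < ln 2.
Proof. rewrite <- ln_1; apply ln_increasing; lra. Qed.

Lemma log2_1 : log2 1 = 0.
Proof. unfold log2; rewrite ln_1; lra. Qed.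

Lemma log2_increasing (x y : R) : 0 < x -> x < y -> log2 x < log2 y.
Proof.
  intros; unfold log2, Rdiv.
  apply Rmult_lt_compat_r; [apply Rinv_0_lt_compat, ln2_pos | apply ln_increasing; auto].
Qed.

Lemma log2_le (x y : R) : 0 < x -> x <= y -> log2 x <= log2 y.
Proof. intros Hx [Hxy | <-]; [left; apply log2_increasing | right]; auto. Qed.

Lemma log2_mult (x y : R) : 0 < x -> 0 < y -> log2 (x * y) = log2 x + log2 y.
Proof. intros; unfold log2; rewrite ln_mult by auto; lra. Qed.

Lemma log2_pow (x : R) (n : nat) : 0 < x -> log2 (x ^ n) = INR n * log2 x.
Proof. intros; unfold log2; rewrite ln_pow by auto; lra. Qed.

Lemma rsum_ext (f g : nat -> R) (a n : nat) :
  (forall i, (a <= i < a + n)%nat -> f i = g i) -> rsum f a n = rsum g a n.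
Proof.
  induction n as [|n IH]; intro Hfg; simpl; [reflexivity|].
  rewrite IH by (intros; apply Hfg; lia); rewrite Hfg by lia; reflexivity.
Qed.

Lemma rsum_shift (f : nat -> R) (n : nat) :
  rsum f 0 (S n) = f 0%nat + rsum (fun i => f (S i)) 0 n.
Proof. induction n as [|n IH]; simpl in *; [ring|]; rewrite IH; ring. Qed.

Lemma rsum_zeros (f : nat -> R) (m n : nat) :
  (m <= n)%nat -> (forall i, (m <= i < n)%nat -> f i = 0) -> rsum f 0 n = rsum f 0 m.
Proof.
  induction n as [|n IH]; intros Hmn Hz.
  - replace m with 0%nat by lia; reflexivity.
  - destruct (Nat.eq_dec m (S n)) as [-> | Hm]; [reflexivity|].
    simpl; rewrite Hz by lia; rewrite IH by (lia || (intros; apply Hz; lia)); ring.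
Qed.

Lemma prefix_S (x : nat -> R) (n : nat) : prefix x (S n) = prefix x n + x n.
Proof. reflexivity. Qed.

Lemma prefix_ext (x y : nat -> R) (n : nat) :
  (forall i, (i < n)%nat -> x i = y i) -> prefix x n = prefix y n.
Proof. intro Hxy; apply rsum_ext; intros i Hi; apply Hxy; lia. Qed.

Lemma prefix_zeros (x : nat -> R) (m n : nat) :
  (m <= n)%nat -> (forall i, (m <= i < n)%nat -> x i = 0) -> prefix x n = prefix x m.
Proof. exact (rsum_zeros x m n). Qed.

Lemma prefix_pos_last (x : nat -> R) (n : nat) : 0 < prefix x n ->
  exists j, (j < n)%nat /\ 0 < x j /\ forall k, (j < k < n)%nat -> x k <= 0.
Proof.
  induction n as [|n IH]; unfold prefix; simpl; intro Hpos; [lra|].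
  destruct (Rlt_or_le 0 (x n)) as [Hxn | Hxn].
  - exists n; repeat split; auto; intros; lia.
  - assert (Hprev : 0 < prefix x n) by (unfold prefix; lra).
    destruct (IH Hprev) as (j & Hj & Hxj & Hlast).
    exists j; split; [lia | split; [exact Hxj|]].
    intros k Hk; destruct (Nat.eq_dec k n) as [-> | Hkn]; [lra | apply Hlast; lia].
Qed.

Lemma prefix_ext_ge (N m : nat) (x : nat -> R) :
  (N <= m)%nat -> prefix (ext N x) m = prefix x N.
Proof.
  intro Hm; rewrite (prefix_zeros _ N m Hm).
  - apply prefix_ext; intros i Hi; unfold ext; rewrite (proj2 (Nat.ltb_lt i N) Hi); reflexivity.
  - intros i Hi; unfold ext; rewrite (proj2 (Nat.ltb_ge i N)) by lia; reflexivity.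
Qed.

Definition upd (x : nat -> R) (n : nat) (a : R) : nat -> R :=
  fun i => if (i =? n)%nat then a else x i.

Lemma upd_eq (x : nat -> R) (n : nat) (a : R) : upd x n a n = a.
Proof. unfold upd; rewrite Nat.eqb_refl; reflexivity. Qed.

Lemma upd_neq (x : nat -> R) (n i : nat) (a : R) : i <> n -> upd x n a i = x i.
Proof. intro Hi; unfold upd; rewrite (proj2 (Nat.eqb_neq i n) Hi); reflexivity. Qed.

Lemma Series_geom_tail (f : nat -> R) (N : nat) (c q : R) :
  Rabs q < 1 -> (forall k, f (N + k)%nat = c * q ^ k) ->
  Series f = rsum f 0 N + c / (1 - q).
Proof.
  intro Hq; revert f; induction N as [|N IH]; intros f Htail.
  - rewrite (Series_ext f (fun k => c * q ^ k)) by exact Htail.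
    rewrite Series_scal_l, Series_geom by exact Hq; simpl; unfold Rdiv; ring.
  - assert (Hex : ex_series f).
    { apply (ex_series_incr_n f (S N)), (ex_series_ext (fun k => scal c (q ^ k))).
      - intro k; symmetry; apply Htail.
      - exact (ex_series_scal_l c _ (ex_series_geom q Hq)). }
    rewrite Series_incr_1, (IH (fun k => f (S k))), rsum_shift by assumption; ring.
Qed.

Section Capacity.

Variables (gamma : R) (w : nat).
Hypotheses (Hgamma : 0 < gamma) (Hw : (1 <= w)%nat).

Definition cap (t : R) : R := log2 (1 + gamma * t).

Definition slot_gain (r a : R) : R :=
  cap a + INR w * (cap ((r - a) / INR w) - cap (r / INR w)).

Lemma cap_0 : cap 0 = 0.
Proof. unfold cap; rewrite Rmult_0_r, Rplus_0_r; exact log2_1. Qed.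

Lemma slot_gain_0 (r : R) : slot_gain r 0 = 0.
Proof. unfold slot_gain; rewrite Rminus_0_r, cap_0; ring. Qed.

Lemma cap_add_lt (a b : R) : 0 < a -> 0 < b -> cap (a + b) < cap a + cap b.
Proof.
  intros Ha Hb; unfold cap; rewrite <- log2_mult by nra.
  assert (0 < gamma * a * (gamma * b)) by (apply Rmult_lt_0_compat; nra).
  apply log2_increasing; nra.
Qed.

Lemma cap_le_mul_cap_div (a : R) : 0 <= a -> cap a <= INR w * cap (a / INR w).
Proof.
  intro Ha; assert (HW : 1 <= INR w) by (apply (le_INR 1); lia).
  assert (Hga : 0 <= gamma * (a / INR w)) by (apply Rmult_le_pos; [lra | apply Rdiv_le_0_compat; lra]).
  unfold cap; rewrite <- log2_pow by lra; apply log2_le; [nra|].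
  replace (gamma * a) with (INR w * (gamma * (a / INR w))) by (field; lra).
  apply Rle_pow_lin, Hga.
Qed.

Lemma slot_gain_diag_nonpos (r : R) : 0 <= r -> slot_gain r r <= 0.
Proof.
  intro Hr; assert (HW : 1 <= INR w) by (apply (le_INR 1); lia).
  unfold slot_gain; rewrite Rminus_diag, Rdiv_0_l, cap_0.
  pose proof (cap_le_mul_cap_div r Hr); lra.
Qed.

(* With [A = 1 + gamma r / w], Bernoulli bounds the loss of the window slots by the
   factor [1 - gamma a / A], and [(1 + gamma a) (1 - gamma a / A) > 1] iff [a < r / w]. *)
Lemma slot_gain_pos (r a : R) : 0 < a -> a < r / INR w -> 0 < slot_gain r a.
Proof.
  intros Ha Har; assert (HW : 1 <= INR w) by (apply (le_INR 1); lia).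
  assert (Hr : a < r).
  { apply (Rmult_lt_compat_r (INR w)) in Har; [|lra].
    unfold Rdiv in Har; rewrite Rmult_assoc, Rinv_l in Har by lra; nra. }
  set (A := 1 + gamma * (r / INR w)); set (A' := 1 + gamma * ((r - a) / INR w)).
  assert (HA' : 0 < A') by (unfold A'; apply Rplus_lt_le_0_compat, Rmult_le_pos, Rdiv_le_0_compat; lra).
  assert (HgA : gamma * a < A - 1) by (unfold A; nra).
  assert (Hga : 0 < gamma * a) by nra.
  assert (HA'A : A' = A - gamma * a / INR w) by (unfold A', A; field; lra).
  set (z := A' / A).
  assert (Hz : 1 - gamma * a / A <= z ^ w).
  { replace (z ^ w) with ((1 + (z - 1)) ^ w) by (f_equal; ring).
    replace (1 - gamma * a / A) with (1 + INR w * (z - 1)).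
    2:{ unfold z; rewrite HA'A; field; split; lra. }
    apply bernoulli_ineq; unfold z; assert (0 < A' / A) by (apply Rdiv_lt_0_compat; lra); lra. }
  assert (Hgain : A ^ w < (1 + gamma * a) * A' ^ w).
  { replace A' with (A * z) by (unfold z; field; lra); rewrite Rpow_mult_distr.
    assert (HAw : 0 < A ^ w) by (apply pow_lt; lra).
    assert (1 < (1 + gamma * a) * (1 - gamma * a / A)).
    { replace ((1 + gamma * a) * (1 - gamma * a / A))
        with (1 + gamma * a * (A - 1 - gamma * a) / A) by (field; lra).
      assert (0 < gamma * a * (A - 1 - gamma * a) / A)
        by (apply Rdiv_lt_0_compat; [apply Rmult_lt_0_compat|]; nra).
      lra. }
    assert ((1 + gamma * a) * (1 - gamma * a / A) <= (1 + gamma * a) * z ^ w)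
      by (apply Rmult_le_compat_l; lra).
    replace ((1 + gamma * a) * (A ^ w * z ^ w)) with (A ^ w * ((1 + gamma * a) * z ^ w)) by ring.
    nra. }
  apply log2_increasing in Hgain; [|apply pow_lt; lra].
  rewrite log2_mult, !log2_pow in Hgain by (try apply pow_lt; nra).
  unfold slot_gain, cap; fold A A'; lra.
Qed.

Lemma slot_gain_transfer (x e : R) :
  0 < e -> e < x -> slot_gain x x < slot_gain x (x - e) + slot_gain e e.
Proof.
  intros He Hex; unfold slot_gain.
  replace (x - (x - e)) with e by ring; rewrite !Rminus_diag, Rdiv_0_l, cap_0.
  pose proof (cap_add_lt (x - e) e ltac:(lra) He) as Hsub.
  replace (x - e + e) with x in Hsub by ring; lra.
Qed.

End Capacity.

Section Objective.

Variables (p gamma B : R) (w : nat).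

Definition T_reduced (N : nat) (x : nat -> R) : R :=
  INR w * cap gamma (B / INR w)
  + rsum (fun i => (1 - p) ^ i * slot_gain gamma w (B - prefix x i) (x i)) 0 N.

Lemma T_reduced_S (n : nat) (x : nat -> R) :
  T_reduced (S n) x
  = T_reduced n x + (1 - p) ^ n * slot_gain gamma w (B - prefix x n) (x n).
Proof. unfold T_reduced; simpl; ring. Qed.

Lemma T_reduced_ext (n : nat) (x y : nat -> R) :
  (forall i, (i < n)%nat -> x i = y i) -> T_reduced n x = T_reduced n y.
Proof.
  intro Hxy; unfold T_reduced; f_equal; apply rsum_ext; intros i Hi.
  rewrite Hxy by lia; rewrite (prefix_ext x y) by (intros; apply Hxy; lia); reflexivity.
Qed.

Lemma T_reduced_zeros (m n : nat) (x : nat -> R) :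
  (m <= n)%nat -> (forall i, (m <= i < n)%nat -> x i = 0) ->
  T_reduced n x = T_reduced m x.
Proof.
  intros Hmn Hz; unfold T_reduced; f_equal; apply rsum_zeros; auto.
  intros i Hi; rewrite Hz, slot_gain_0 by lia; ring.
Qed.

(* Summation by parts: since [p + (1 - p) = 1], the residual-budget weight of
   slot [i] together with all later weights telescopes into [slot_gain]. *)
Lemma T_reduced_abel (n : nat) (x : nat -> R) :
  rsum (fun i => p * (1 - p) ^ (i + w) * (1 / 2) * cap gamma (x i)) 0 n
  + rsum (fun i => p ^ 2 * (1 - p) ^ (i + w) * (INR w / 2)
                     * cap gamma ((B - prefix x (S i)) / INR w)) 0 n
  + p * (1 - p) ^ (n + w) * (INR w / 2) * cap gamma ((B - prefix x n) / INR w)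
  = p * (1 - p) ^ w / 2 * T_reduced n x.
Proof.
  induction n as [|n IH].
  - unfold T_reduced, prefix; simpl; rewrite Rminus_0_r; field.
  - rewrite T_reduced_S, Rmult_plus_distr_l, <- IH; simpl rsum.
    replace (B - prefix x (S n)) with (B - prefix x n - x n) by (rewrite prefix_S; ring).
    unfold slot_gain; rewrite !pow_add; simpl pow.
    set (Qn := (1 - p) ^ n); set (Qw := (1 - p) ^ w); unfold Rdiv; ring.
Qed.

Hypothesis Hp : 0 < p < 1.

Lemma T_N_eq (N : nat) (x : nat -> R) :
  T_N p gamma B w N x
  = rsum (fun k => p ^ 2 * (1 - p) ^ (k - 1) * (INR k / 2)
                     * log2 (1 + gamma * (B / INR k))) 1 w
    + p * (1 - p) ^ w / 2 * T_reduced N x.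
Proof.
  assert (Hq : Rabs (1 - p) < 1) by (rewrite Rabs_right; lra).
  unfold T_N, T_inf.
  rewrite (Series_geom_tail _ N 0 (1 - p) Hq).
  2:{ intro k; unfold ext; rewrite (proj2 (Nat.ltb_ge (N + k) N)) by lia.
      rewrite Rmult_0_r, Rplus_0_r, log2_1; ring. }
  rewrite (Series_geom_tail _ N (p ^ 2 * (1 - p) ^ (N + w) * (INR w / 2)
                                  * cap gamma ((B - prefix x N) / INR w)) (1 - p) Hq).
  2:{ intro k; rewrite prefix_ext_ge by lia.
      replace (S (N + k) + w - 1)%nat with (N + w + k)%nat by lia.
      rewrite pow_add; unfold cap; ring. }
  rewrite (rsum_ext (fun i => p * (1 - p) ^ (S i + w - 1) * (1 / 2)
                               * log2 (1 + gamma * ext N x i))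
                    (fun i => p * (1 - p) ^ (i + w) * (1 / 2) * cap gamma (x i)) 0 N).
  2:{ intros i Hi; unfold ext; rewrite (proj2 (Nat.ltb_lt i N)) by lia.
      replace (S i + w - 1)%nat with (i + w)%nat by lia; reflexivity. }
  rewrite (rsum_ext (fun i => p ^ 2 * (1 - p) ^ (S i + w - 1) * (INR w / 2)
                               * log2 (1 + gamma * ((B - prefix (ext N x) (S i)) / INR w)))
                    (fun i => p ^ 2 * (1 - p) ^ (i + w) * (INR w / 2)
                               * cap gamma ((B - prefix x (S i)) / INR w)) 0 N).
  2:{ intros i Hi; rewrite (prefix_ext (ext N x) x).
      - replace (S i + w - 1)%nat with (i + w)%nat by lia; reflexivity.
      - intros k Hk; unfold ext; rewrite (proj2 (Nat.ltb_lt k N)) by lia; reflexivity. }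
  rewrite <- T_reduced_abel; field; lra.
Qed.

Lemma maximizer_T_reduced_le (N : nat) (xi y : nat -> R) :
  is_maximizer p gamma B w N xi -> admissibleN B N y -> T_reduced N y <= T_reduced N xi.
Proof.
  intros [_ Hmax] Hy; specialize (Hmax y Hy); rewrite !T_N_eq in Hmax.
  assert (0 < p * (1 - p) ^ w / 2)
    by (apply Rdiv_lt_0_compat; [apply Rmult_lt_0_compat; [|apply pow_lt] |]; lra).
  apply (Rmult_le_reg_l (p * (1 - p) ^ w / 2)); lra.
Qed.

End Objective.

Section Improvement.

Variables (p gamma B : R) (w : nat).
Hypotheses (Hp : 0 < p < 1) (Hgamma : 0 < gamma) (Hw : (1 <= w)%nat).

Lemma T_reduced_improve_slack (n : nat) (xi : nat -> R) :
  admissibleN B (S n) xi -> xi n = 0 -> prefix xi (S n) < B ->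
  exists y, admissibleN B (S n) y
            /\ T_reduced p gamma B w (S n) xi < T_reduced p gamma B w (S n) y.
Proof.
  intros [Hnn _] Hxn Hslack.
  assert (HW : 1 <= INR w) by (apply (le_INR 1); lia).
  rewrite prefix_S, Hxn in Hslack.
  set (r := B - prefix xi n).
  set (a := r / (2 * INR w)).
  assert (Ha : 0 < a) by (unfold a, r; apply Rdiv_lt_0_compat; lra).
  assert (Har : a * (2 * INR w) = r) by (unfold a; field; lra).
  assert (Ha_lt : a < r / INR w)
    by (replace (r / INR w) with (2 * a) by (rewrite <- Har; field; lra); lra).
  set (y := upd xi n a).
  assert (Hbelow : forall i, (i < n)%nat -> y i = xi i) by (intros; apply upd_neq; lia).
  exists y; split; [split|].
  - intros i Hi; destruct (Nat.eq_dec i n) as [-> | Hin].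
    + unfold y; rewrite upd_eq; lra.
    + unfold y; rewrite upd_neq by exact Hin; apply Hnn; exact Hi.
  - rewrite prefix_S, (prefix_ext y xi n Hbelow); unfold y; rewrite upd_eq; unfold r in Har; nra.
  - rewrite !T_reduced_S, (T_reduced_ext _ _ _ _ n y xi Hbelow), (prefix_ext y xi n Hbelow).
    rewrite Hxn, slot_gain_0; unfold y; rewrite upd_eq; fold r.
    assert (0 < (1 - p) ^ n * slot_gain gamma w r a)
      by (apply Rmult_lt_0_compat; [apply pow_lt; lra | apply slot_gain_pos; auto]).
    lra.
Qed.

Lemma T_reduced_improve_tight (n : nat) (xi : nat -> R) :
  0 < B -> admissibleN B (S n) xi -> xi n = 0 -> prefix xi (S n) = B ->
  exists y, admissibleN B (S n) y
            /\ T_reduced p gamma B w (S n) xi < T_reduced p gamma B w (S n) y.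
Proof.
  intros HB [Hnn _] Hxn Htight.
  destruct (prefix_pos_last xi (S n)) as (j & Hj & Hxj & Hlast); [lra|].
  assert (Hjn : (j < n)%nat) by (destruct (Nat.eq_dec j n); [subst; lra | lia]).
  assert (Hzero : forall i, (S j <= i < S n)%nat -> xi i = 0).
  { intros i Hi; pose proof (Hnn i ltac:(lia)); pose proof (Hlast i ltac:(lia)); lra. }
  assert (Hres : B - prefix xi j = xi j).
  { rewrite <- Htight, (prefix_zeros xi (S j) (S n)), prefix_S by (lia || auto); ring. }
  set (e := xi j / 2).
  set (y := upd (upd xi j (xi j - e)) n e).
  assert (Hy_below : forall i, (i < j)%nat -> y i = xi i)
    by (intros; unfold y; rewrite !upd_neq by lia; reflexivity).
  assert (Hy_j : y j = xi j - e) by (unfold y; rewrite upd_neq, upd_eq by lia; reflexivity).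
  assert (Hy_mid : forall i, (S j <= i < n)%nat -> y i = 0)
    by (intros; unfold y; rewrite !upd_neq by lia; apply Hzero; lia).
  assert (Hy_n : y n = e) by (unfold y; apply upd_eq).
  assert (Hprefix_y : prefix y n = B - e).
  { rewrite (prefix_zeros y (S j) n), prefix_S, (prefix_ext y xi j), Hy_j by (lia || auto).
    lra. }
  exists y; split; [split|].
  - intros i Hi; destruct (Nat.eq_dec i n) as [-> | Hin]; [unfold e in Hy_n; lra|].
    destruct (Nat.eq_dec i j) as [-> | Hij]; [unfold e in Hy_j; lra|].
    unfold y; rewrite !upd_neq by assumption; apply Hnn; exact Hi.
  - rewrite prefix_S, Hprefix_y, Hy_n; lra.
  - rewrite (T_reduced_zeros _ _ _ _ (S j) (S n) xi) by (lia || auto).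
    rewrite (T_reduced_S _ _ _ _ n y), (T_reduced_zeros _ _ _ _ (S j) n y) by (lia || auto).
    rewrite !T_reduced_S, (T_reduced_ext _ _ _ _ j y xi), (prefix_ext y xi j) by auto.
    rewrite Hprefix_y, Hy_j, Hy_n, Hres; replace (B - (B - e)) with e by ring.
    assert (He : 0 < e) by (unfold e; lra).
    pose proof (slot_gain_transfer gamma w Hgamma (xi j) e He ltac:(unfold e; lra)) as Htransfer.
    assert (Hqj : 0 < (1 - p) ^ j) by (apply pow_lt; lra).
    assert (slot_gain gamma w e e * (1 - p) ^ j <= slot_gain gamma w e e * (1 - p) ^ n)
      by (apply Rmult_le_compat_neg_l;
          [apply slot_gain_diag_nonpos; auto; lra | apply pow_le_pow_of_le_1; lra || lia]).
    assert ((1 - p) ^ j * slot_gain gamma w (xi j) (xi j)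
            < (1 - p) ^ j * (slot_gain gamma w (xi j) (xi j - e) + slot_gain gamma w e e))
      by (apply Rmult_lt_compat_l; assumption).
    lra.
Qed.

Lemma T_reduced_improvable (n : nat) (xi : nat -> R) :
  0 < B -> admissibleN B (S n) xi -> xi n = 0 ->
  exists y, admissibleN B (S n) y
            /\ T_reduced p gamma B w (S n) xi < T_reduced p gamma B w (S n) y.
Proof.
  intros HB Hadm Hxn.
  destruct (Rlt_or_le (prefix xi (S n)) B) as [Hslack | Htight].
  - exact (T_reduced_improve_slack n xi Hadm Hxn Hslack).
  - apply T_reduced_improve_tight; auto; destruct Hadm; lra.
Qed.

End Improvement.

Theorem lemma3 (p gamma B : R) (w N : nat) (xi : nat -> R) :
  0 < p < 1 -> 0 < gamma -> 0 < B -> (1 <= w)%nat -> (1 <= N)%nat ->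
  is_maximizer p gamma B w N xi ->
  (forall eta, is_maximizer p gamma B w N eta ->
     forall i, (i < N)%nat -> eta i = xi i) ->
  0 < xi (N - 1)%nat.
Proof.
  intros Hp Hgamma HB Hw HN [Hadm Hmax] _.
  destruct N as [|n]; [lia|].
  replace (S n - 1)%nat with n by lia.
  destruct (Rlt_or_le 0 (xi n)) as [Hpos | Hnpos]; [exact Hpos | exfalso].
  assert (Hxn : xi n = 0) by (pose proof (proj1 Hadm n ltac:(lia)); lra).
  destruct (T_reduced_improvable p gamma B w Hp Hgamma Hw n xi HB Hadm Hxn) as (y & Hy & Hlt).
  pose proof (maximizer_T_reduced_le p gamma B w Hp (S n) xi y (conj Hadm Hmax) Hy).
  lra.
Qed.
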